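(* Let $\mathbb{F}$ be a field, let $A$ be a matrix over $\mathbb{F}$ with $n$ columns, and let $B$ be a matrix over $\mathbb{F}$ with $n$ columns whose row space is the orthogonal complement $W^\perp=\{x\in\mathbb{F}^n: x\cdot w=0\ \forall w\in W\}$ of the row space $W$ of $A$ (so that $M(B)$ represents the dual matroid $M(A)^*$). Then $\mathrm{csd}(M(A))=\mathrm{dsd}(M(B))$.
   Context: Here $x\cdot w=\sum_i x_iw_i$. $M(A)$ is the column matroid of $A$ (ground set: the columns, indexed by $\{1,\dots,n\}$; independent sets: linearly independent sets of columns). A matroid is connected if any two elements lie in a common circuit; components are maximal connected restrictions. Contraction$^*$-depth: for a matrix $A$ with $m$ rows and a subspace $K\subseteq\mathbb{F}^m$, let $M(A,K)$ be the matroid on the columns where a set $\{u_1,\dots,u_\ell\}$ is dependent iff some $\sum\alpha_iu_i\in K$ with not all $\alpha_i=0$. Set $\mathrm{csd}(A,K)=0$ if $M(A,K)$ has rank $0$; otherwise if $M(A,K)$ is disconnected, $\mathrm{csd}(A,K)=\max_C \mathrm{csd}(A_C,K)$ over components $C$ ($A_C$ the submatrix of columns in $C$); otherwise $\mathrm{csd}(A,K)=1+\min_{v\in\mathbb{F}^m}\mathrm{csd}(A,K+\mathrm{span}(v))$; and $\mathrm{csd}(M(A))=\mathrm{csd}(A,\{0\})$. Deletion$^*$-depth: for a matrix $B$ with $n$ columns, $\mathrm{dsd}(M(B))=0$ if the rank of $M(B)$ equals its number of elements; otherwise if $M(B)$ is disconnected, $\mathrm{dsd}(M(B))$ is the maximum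 of $\mathrm{dsd}(M(B_C))$ over the components $C$; otherwise $\mathrm{dsd}(M(B))=1+\min_{v\in\mathbb{F}^n}\mathrm{dsd}(M(B\oplus v^\top))$, where $B\oplus v^\top$ is $B$ with the row $v^\top$ appended. *)

From HB Require Import structures.
From mathcomp Require Import all_boot all_order all_algebra.
Set Implicit Arguments. Unset Strict Implicit. Unset Printing Implicit Defensive.
Import GRing.Theory.
Local Open Scope ring_scope.

Section MatroidNotions.
Variables (n : nat) (dep : {set 'I_n} -> Prop).

Definition indep (X : {set 'I_n}) : Prop := ~ dep X.

Definition rank_of (S : {set 'I_n}) (r : nat) : Prop :=
  (exists2 X : {set 'I_n}, X \subset S & indep X /\ #|X| = r) /\
  (forall X : {set 'I_n}, X \subset S -> indep X -> (#|X| <= r)%N).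

Definition circuit (C : {set 'I_n}) : Prop :=
  dep C /\ forall D : {set 'I_n}, D \proper C -> ~ dep D.

(* the restriction to S is connected: any two distinct elements of S lie
   in a common circuit of the restriction (= a circuit contained in S) *)
Definition connected_on (S : {set 'I_n}) : Prop :=
  forall e f : 'I_n, e \in S -> f \in S -> e != f ->
    exists C : {set 'I_n}, [/\ circuit C, C \subset S, e \in C & f \in C].

Definition component (S C : {set 'I_n}) : Prop :=
  [/\ C \subset S, connected_on C &
      forall C' : {set 'I_n}, C \subset C' -> C' \subset S -> connected_on C' -> C' = C].

End MatroidNotions.

(* The matroid M(M, K): columns of M : 'M_(k,n) (vectors of F^k), a set *)
(* X of columns is dependent iff some nontrivial combination of them     *)
(* lies in the subspace K (given as the row space of a k x k matrix).    *)
(* alpha *m M^T = \sum_j alpha_j (column j of M)^T.                      *)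
(* With K = 0 this is the column matroid M(M).                           *)
Definition mat_dep (F : fieldType) (k n : nat) (M : 'M[F]_(k, n)) (K : 'M[F]_k)
    (X : {set 'I_n}) : Prop :=
  exists alpha : 'rV[F]_n,
    [/\ alpha != 0, (forall i : 'I_n, i \notin X -> alpha 0 i = 0) &
        (alpha *m M^T <= K)%MS].

(* Contraction*-depth.  csd_le A d K S  means  csd(A_S, K) <= d, where    *)
(* A_S is the submatrix of A on the columns S (inductive = least fixpoint *)
(* of the recursive definition).                                          *)
Inductive csd_le (F : fieldType) (m n : nat) (A : 'M[F]_(m, n)) :
    nat -> 'M[F]_m -> {set 'I_n} -> Prop :=
| csd_rank0 d K S :
    rank_of (mat_dep A K) S 0 -> csd_le A d K S
| csd_disconnected d K S :
    ~ rank_of (mat_dep A K) S 0 -> ~ connected_on (mat_dep A K) S ->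
    (forall C, component (mat_dep A K) S C -> csd_le A d K C) ->
    csd_le A d K S
| csd_connected d K S (v : 'rV[F]_m) :
    ~ rank_of (mat_dep A K) S 0 -> connected_on (mat_dep A K) S ->
    csd_le A d (K + v)%MS S -> csd_le A d.+1 K S.

Definition csd_is (F : fieldType) (m n : nat) (A : 'M[F]_(m, n)) (d : nat) : Prop :=
  csd_le A d 0 setT /\ forall d', csd_le A d' 0 setT -> (d <= d')%N.

(* Deletion*-depth.  dsd_le d B S  means  dsd(M(B_S)) <= d.  Appending a *)
(* row v^T to B is  col_mx B v.                                           *)
Inductive dsd_le (F : fieldType) (n : nat) :
    nat -> forall p : nat, 'M[F]_(p, n) -> {set 'I_n} -> Prop :=
| dsd_free d p (B : 'M[F]_(p, n)) S :
    rank_of (mat_dep B 0) S #|S| -> dsd_le d B S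
| dsd_disconnected d p (B : 'M[F]_(p, n)) S :
    ~ rank_of (mat_dep B 0) S #|S| -> ~ connected_on (mat_dep B 0) S ->
    (forall C, component (mat_dep B 0) S C -> dsd_le d B C) ->
    dsd_le d B S
| dsd_connected d p (B : 'M[F]_(p, n)) S (v : 'rV[F]_n) :
    ~ rank_of (mat_dep B 0) S #|S| -> connected_on (mat_dep B 0) S ->
    dsd_le d (col_mx B v) S -> dsd_le d.+1 B S.

Definition dsd_is (F : fieldType) (p n : nat) (B : 'M[F]_(p, n)) (d : nat) : Prop :=
  dsd_le d B setT /\ forall d', dsd_le d' B setT -> (d <= d')%N.

(* Both matroids are linear matroids on the column indices: X is dependent iff
   it contains the support of a nonzero vector of a subspace P of F^n.  For
   M(A, K) this is the space of column relations of A modulo K, for M(B) the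
   space of column relations of B, and by hypothesis the two are orthogonal
   complements.  Such duality of P and Q on the coordinates S is all that the two
   depth recursions look at: S has rank 0 for P iff it is independent for Q; P
   and Q have the same separators (sets T such that projecting onto T preserves
   the subspace), hence the same connectivity and the same components, and the
   duality passes to each component; finally, contracting a vector (K := K + v)
   adds one vector u to P, which dually intersects Q with the orthogonal of u,
   i.e. appends the row u to B.  So csd <= d and dsd <= d hold together, and the
   least such d is common to both. *)

From HB Require Import structures.
From mathcomp Require Import all_boot all_order all_algebra.
From mathcomp Require Import boolp ring zify.
Set Implicit Arguments. Unset Strict Implicit. Unset Printing Implicit Defensive.
Import GRing.Theory.
Local Open Scope ring_scope.

Section RowSupport.
Variables (F : fieldType) (n : nat).
Implicit Types (a b u : 'rV[F]_n) (i e : 'I_n) (S T X : {set 'I_n}).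

Definition supp a := [set i | a 0 i != 0].
Definition proj_on T a : 'rV[F]_n := \row_i (if i \in T then a 0 i else 0).
Definition dot a b := \sum_i a 0 i * b 0 i.
Definition unit_row e : 'rV[F]_n := \row_i (if i == e then 1 else 0).
Definition pivot a b h := a - (a 0 h / b 0 h) *: b.

Lemma in_supp a i : (i \in supp a) = (a 0 i != 0).
Proof. by rewrite inE. Qed.

Lemma suppP X a : reflect (forall i, i \notin X -> a 0 i = 0) (supp a \subset X).
Proof.
apply: (iffP subsetP) => [sub i iX | a0 i].
  by apply/eqP; rewrite -[_ == 0]negbK -in_supp; apply: contra iX; exact: sub.
by rewrite in_supp; apply: contraR => /a0->.
Qed.

Lemma supp_eq0 a : (supp a == set0) = (a == 0).
Proof.
apply/eqP/eqP => [a0 | ->]; last by apply/setP => i; rewrite !inE mxE eqxx.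
by apply/rowP => i; rewrite mxE; apply/eqP; rewrite -[_ == _]negbK -in_supp a0 inE.
Qed.

Lemma supp0 : supp 0 = set0.
Proof. by apply/eqP; rewrite supp_eq0. Qed.

Lemma supp_lin X a b c :
  supp a \subset X -> supp b \subset X -> supp (a - c *: b) \subset X.
Proof. by move=> /suppP aX /suppP bX; apply/suppP => i iX; rewrite !mxE aX ?bX ?mulr0 ?subr0. Qed.

Lemma supp_proj_on T a : supp (proj_on T a) = supp a :&: T.
Proof. by apply/setP => i; rewrite !inE mxE; case: (i \in T); rewrite ?eqxx ?andbF ?andbT. Qed.

Lemma supp_proj_on_sub T a : supp (proj_on T a) \subset T.
Proof. by rewrite supp_proj_on subsetIr. Qed.

Lemma supp_proj_onS T S a : supp a \subset S -> supp (proj_on T a) \subset S.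
Proof. by move=> aS; rewrite supp_proj_on; apply: subset_trans aS; apply: subsetIl. Qed.

Lemma proj_on_id T a : supp a \subset T -> proj_on T a = a.
Proof. by move=> /suppP aT; apply/rowP => i; rewrite mxE; case: ifPn => // /aT->. Qed.

Lemma proj_onB T a b c : proj_on T (a - c *: b) = proj_on T a - c *: proj_on T b.
Proof. by apply/rowP => i; rewrite !mxE; case: ifP; rewrite ?mulr0 ?subr0. Qed.

Lemma supp_unit_row e : supp (unit_row e) = [set e].
Proof. by apply/setP => i; rewrite !inE mxE; case: (i == e); rewrite ?oner_eq0 ?eqxx. Qed.

Lemma unit_row_neq0 e : unit_row e != 0.
Proof. by rewrite -supp_eq0 supp_unit_row; apply/set0Pn; exists e; rewrite inE. Qed.

Lemma supp_pivot a b h : b 0 h != 0 -> supp b \subset supp a ->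
  supp (pivot a b h) \subset supp a :\ h.
Proof.
move=> bh0 /suppP ba; apply/subsetP => i; rewrite in_setD1 !in_supp /pivot !mxE.
have [->|_] := eqVneq i h; first by rewrite divfK // subrr eqxx.
apply: contraNN => /eqP ai0.
by rewrite ai0 (ba i) ?in_supp ?ai0 ?eqxx // mulr0 subr0.
Qed.

Lemma card_supp_pivot a b h : b 0 h != 0 -> supp b \subset supp a -> a 0 h != 0 ->
  (#|supp (pivot a b h)| < #|supp a|)%N.
Proof.
move=> bh0 ba ah0; apply: leq_ltn_trans (subset_leq_card (supp_pivot bh0 ba)) _.
by rewrite [#|supp a|](cardsD1 h) in_supp ah0.
Qed.

Lemma dotC a b : dot a b = dot b a.
Proof. by apply: eq_bigr => i _; rewrite mulrC. Qed.

Lemma dotBl a b c u : dot (a - c *: b) u = dot a u - c * dot b u.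
Proof. by rewrite /dot mulr_sumr -sumrB; apply: eq_bigr => i _; rewrite !mxE mulrBl mulrA. Qed.

Lemma dotBr a b c u : dot u (a - c *: b) = dot u a - c * dot u b.
Proof. by rewrite dotC dotBl !(dotC u). Qed.

Lemma dot0r a : dot a 0 = 0.
Proof. by rewrite /dot big1 // => i _; rewrite mxE mulr0. Qed.

Lemma dot_unit_row e a : dot (unit_row e) a = a 0 e.
Proof.
rewrite /dot (bigD1 e) //= big1 ?addr0 => [|i /negbTE ie]; rewrite mxE ?eqxx ?mul1r //.
by rewrite ie mul0r.
Qed.

Lemma dot_proj_on T a b : dot (proj_on T a) b = dot a (proj_on T b).
Proof. by apply: eq_bigr => i _; rewrite !mxE; case: (i \in T); rewrite ?mul0r ?mulr0. Qed.

Lemma dot_mx a b : (a *m b^T) 0 0 = dot a b.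
Proof. by rewrite mxE; apply: eq_bigr => i _; rewrite mxE. Qed.

End RowSupport.

Arguments unit_row {F n} e.

Section MatroidFacts.
Variables (n : nat) (dep : {set 'I_n} -> Prop).
Implicit Types (S C : {set 'I_n}) (e f : 'I_n).

Definition linked S e f := exists C, [/\ circuit dep C, C \subset S, e \in C & f \in C].
Definition comp_of S e := [set f in S | `[< f = e \/ linked S e f >]].

Lemma comp_ofP S e f : f \in comp_of S e <-> f \in S /\ (f = e \/ linked S e f).
Proof. by rewrite inE; split => [/andP [-> /asboolP]|[-> /asboolP]]. Qed.

Lemma comp_of_sub S e : comp_of S e \subset S.
Proof. by apply/subsetP => f /comp_ofP []. Qed.

Lemma mem_comp_of S e : e \in S -> e \in comp_of S e.
Proof. by move=> eS; apply/comp_ofP; split; first by []; left. Qed.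

Lemma rank_fullP S : rank_of dep S #|S| <-> ~ dep S.
Proof.
split => [[[X XS [Xindep cardX]] _] | Sindep].
  by have /eqP <- : X == S by rewrite eqEcard XS cardX leqnn.
by split => [|X XS _]; [exists S | exact: subset_leq_card].
Qed.

Lemma component_set0P S : component dep S set0 <-> S = set0.
Proof.
split => [[_ _ maxC] | ->].
  apply/setP => s; rewrite inE; apply/negP => sS.
  have conn_s : connected_on dep [set s] by move=> e f /set1P-> /set1P->; rewrite eqxx.
  have s_sub : [set s] \subset S by rewrite sub1set.
  by have /setP/(_ s) := maxC _ (sub0set _) s_sub conn_s; rewrite !inE eqxx.
split; [exact: sub0set | by move=> e f; rewrite inE | by move=> C' _; rewrite subset0 => /eqP].
Qed.

End MatroidFacts.

Definition lin_dep (F : fieldType) (n : nat) (P : 'rV[F]_n -> Prop) (X : {set 'I_n}) :=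
  exists alpha : 'rV[F]_n,
    [/\ alpha != 0, (forall i : 'I_n, i \notin X -> alpha 0 i = 0) & P alpha].

Definition subspace (F : fieldType) (n : nat) (P : 'rV[F]_n -> Prop) :=
  P 0 /\ forall c a b, P a -> P b -> P (c *: a + b).

Section LinearMatroid.
Variables (F : fieldType) (n : nat) (P : 'rV[F]_n -> Prop).
Hypothesis subP : subspace P.
Implicit Types (a b d : 'rV[F]_n) (e f h x y z : 'I_n) (S T X C D : {set 'I_n}).
Local Notation dep := (lin_dep P).

Lemma subspace0 : P 0.
Proof. exact: subP.1. Qed.

Lemma subspaceD a b : P a -> P b -> P (a + b).
Proof. by move=> Pa Pb; rewrite -[a]scale1r; apply: subP.2. Qed.

Lemma subspaceZ c a : P a -> P (c *: a).
Proof. by move=> Pa; rewrite -[_ *: _]addr0; apply: subP.2 Pa subspace0. Qed.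

Lemma subspaceB c a b : P a -> P b -> P (a - c *: b).
Proof. by move=> Pa Pb; rewrite -scaleNr addrC; apply: subP.2. Qed.

Lemma lin_depP X : dep X <-> exists2 a, a != 0 & supp a \subset X /\ P a.
Proof.
split=> [[a [a0 /suppP aX Pa]] | [a a0 [/suppP aX Pa]]]; first by exists a.
by exists a; split.
Qed.

Lemma lin_dep_supp a : a != 0 -> P a -> dep (supp a).
Proof. by move=> a0 Pa; apply/lin_depP; exists a. Qed.

Lemma circuit_supp D : circuit dep D -> exists2 a, a != 0 & P a /\ supp a = D.
Proof.
case=> /lin_depP [a a0 [aD Pa]] Dmin; exists a => //; split=> //.
apply/eqP; rewrite eqEsubset aD; apply/contraT => DnA.
by case: (Dmin (supp a)); [rewrite properE aD | exact: lin_dep_supp].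
Qed.

Lemma circuit_in_supp d f : P d -> d 0 f != 0 ->
  exists D, [/\ circuit dep D, f \in D & D \subset supp d].
Proof.
have [k] := ubnP #|supp d|; elim: k d => // k IH d /[!ltnS] le_dk Pd df0.
have [[b [b0 Pb lt_bd]] | minimal] :=
  EM (exists b, [/\ b != 0, P b & supp b \proper supp d]); last first.
  exists (supp d); rewrite in_supp df0; split => //.
  split=> [|D lt_Dd /lin_depP [a a0 [aD Pa]]].
    by apply: lin_dep_supp Pd; apply: contraNneq df0 => ->; rewrite mxE.
  by apply: minimal; exists a; split => //; apply: sub_proper_trans lt_Dd.
have le_bk := leq_trans (proper_card lt_bd) le_dk.
have sub_bd := proper_sub lt_bd.
have [bf0 | /negPn/eqP bf0] := boolP (b 0 f != 0).
  have [D [cD fD Db]] := IH b le_bk Pb bf0.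
  by exists D; split => //; apply: subset_trans sub_bd.
have /set0Pn [h bh] : supp b != set0 by rewrite supp_eq0.
have dh0 : d 0 h != 0 by rewrite -in_supp (subsetP sub_bd).
rewrite in_supp in bh.
have lt_pk := leq_trans (card_supp_pivot bh sub_bd dh0) le_dk.
have pf0 : pivot d b h 0 f != 0 by rewrite /pivot !mxE bf0 mulr0 subr0.
have [D [cD fD Dp]] := IH _ lt_pk (subspaceB _ Pd Pb) pf0.
exists D; split => //; apply: subset_trans Dp (subset_trans (supp_pivot bh sub_bd) _).
exact: subsetDl.
Qed.

Lemma circuit_elim C1 C2 x y : circuit dep C1 -> circuit dep C2 ->
  y \in C1 :&: C2 -> x \in C1 :\: C2 ->
  exists C3, [/\ circuit dep C3, x \in C3, C3 \subset (C1 :|: C2) :\ y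
                 & C3 :&: (C2 :\: C1) != set0].
Proof.
move=> c1 c2; have [a1 _ [P1 a1C1]] := circuit_supp c1; have [a2 _ [P2 a2C2]] := circuit_supp c2.
rewrite inE => /andP [y1 y2] /setDP [x1 x2].
have x_piv : pivot a1 a2 y 0 x != 0.
  by move: x2 x1; rewrite -a1C1 -a2C2 !in_supp negbK /pivot !mxE => /eqP->; rewrite mulr0 subr0.
have [C3 [c3 xC3 C3p]] := circuit_in_supp (subspaceB _ P1 P2) x_piv.
have C3sub : C3 \subset (C1 :|: C2) :\ y.
  apply: subset_trans C3p _; rewrite -a1C1 -a2C2 in y2 *.
  apply/subsetP => i; rewrite in_setD1 in_setU !in_supp /pivot !mxE.
  have [-> | _ /=] := eqVneq i y; first by rewrite divfK ?subrr ?eqxx // -in_supp.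
  by apply: contraTT; rewrite negb_or !negbK => /andP [/eqP-> /eqP->]; rewrite mulr0 subr0 eqxx.
exists C3; split => //.
have [_ minC1] := c1; have [depC3 _] := c3.
have /subsetPn [w wC3 wC1] : ~~ (C3 \subset C1).
  apply/negP => C31; apply: (minC1 C3) depC3; rewrite properE C31; apply/subsetPn.
  by exists y => //; apply/negP => /(subsetP C3sub); rewrite !inE eqxx.
apply/set0Pn; exists w; rewrite !inE wC3 (negbTE wC1) /=.
by move: (subsetP C3sub w wC3); rewrite !inE (negbTE wC1) => /andP [].
Qed.

Lemma circuit_link C1 C2 x z : circuit dep C1 -> circuit dep C2 ->
  x \in C1 -> z \in C2 -> C1 :&: C2 != set0 ->
  exists C, [/\ circuit dep C, x \in C, z \in C & C \subset C1 :|: C2].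
Proof.
have [N] := ubnP #|C1 :|: C2|; elim: N C1 C2 x z => // N IH C1 C2 x z /[!ltnS] leN c1 c2 x1 z2.
case/set0Pn => y yC12.
have recurse C C' : circuit dep C -> circuit dep C' -> x \in C -> z \in C' ->
    C :&: C' != set0 -> C :|: C' \subset C1 :|: C2 -> (#|C :|: C'| < #|C1 :|: C2|)%N ->
    exists C0, [/\ circuit dep C0, x \in C0, z \in C0 & C0 \subset C1 :|: C2].
  move=> c c' xC zC' meet sub lt.
  have [C0 [c0 xC0 zC0 sub0]] := IH C C' x z (leq_trans lt leN) c c' xC zC' meet.
  by exists C0; split => //; apply: subset_trans sub.
have [x2 | x2] := boolP (x \in C2); first by exists C2; rewrite subsetUr.
have [z1 | z1] := boolP (z \in C1); first by exists C1; rewrite subsetUl.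
have yC21 : y \in C2 :&: C1 by rewrite setIC.
have xC12 : x \in C1 :\: C2 by rewrite inE x1 x2.
have zC21 : z \in C2 :\: C1 by rewrite inE z1 z2.
have [C3 [c3 xC3 C3sub meet3]] := circuit_elim c1 c2 yC12 xC12.
have [C4 [c4 zC4 C4sub meet4]] := circuit_elim c2 c1 yC21 zC21.
have [w3 /setIP [w3C3 /setDP [w3C2 _]]] := set0Pn _ meet3.
have [w4 /setIP [w4C4 /setDP [w4C1 w4C2]]] := set0Pn _ meet4.
rewrite setUC in C4sub.
have sub3 : C3 :|: C2 \subset C1 :|: C2.
  by rewrite subUset subsetUr (subset_trans C3sub (subsetDl _ _)).
have sub4 : C1 :|: C4 \subset C1 :|: C2.
  by rewrite subUset subsetUl (subset_trans C4sub (subsetDl _ _)).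
have [lt3 | ge3] := ltnP #|C3 :|: C2| #|C1 :|: C2|.
  by apply: recurse c3 c2 xC3 z2 _ sub3 lt3; apply/set0Pn; exists w3; rewrite inE w3C3.
have [lt4 | ge4] := ltnP #|C1 :|: C4| #|C1 :|: C2|.
  by apply: recurse c1 c4 x1 zC4 _ sub4 lt4; apply/set0Pn; exists w4; rewrite inE w4C1.
have w4C3 : w4 \in C3.
  have /eqP e3 : C3 :|: C2 == C1 :|: C2 by rewrite eqEcard sub3 ge3.
  have : w4 \in C1 :|: C2 by rewrite inE w4C1.
  by rewrite -e3 inE (negbTE w4C2) orbF.
have sub34 : C3 :|: C4 \subset (C1 :|: C2) :\ y by rewrite subUset C3sub C4sub.
apply: recurse c3 c4 xC3 zC4 _ (subset_trans sub34 (subsetDl _ _)) _.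
  by apply/set0Pn; exists w4; rewrite inE w4C3.
apply: leq_ltn_trans (subset_leq_card sub34) _.
by rewrite [#|C1 :|: C2|](cardsD1 y) in_setU (setIP yC12).1.
Qed.

(* T is a union of components of S exactly when projecting onto T preserves the
   vectors of P supported on S; this form transfers directly to the orthogonal. *)
Definition separator S T := T \subset S /\ forall a, supp a \subset S -> P a -> P (proj_on T a).

Lemma separator_circuit S T D x : separator S T -> circuit dep D -> D \subset S ->
  x \in D -> x \in T -> D \subset T.
Proof.
move=> [_ sepT] cD DS xD xT; have [_ minD] := cD.
have [a a0 [Pa aD]] := circuit_supp cD.
apply/negPn/negP => DnT; apply: (minD (D :&: T)).
  by rewrite properE subsetIl subsetI subxx DnT.
apply/lin_depP; exists (proj_on T a).
  by rewrite -supp_eq0 supp_proj_on aD; apply/set0Pn; exists x; rewrite inE xD.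
by rewrite supp_proj_on aD; split => //; apply: sepT; rewrite ?aD.
Qed.

Lemma circuit_closed_separator S T : T \subset S ->
  (forall D x, circuit dep D -> D \subset S -> x \in D -> x \in T -> D \subset T) ->
  separator S T.
Proof.
move=> TS closedT; split=> // a.
have [k] := ubnP #|supp a|; elim: k a => // k IH a /[!ltnS] le_ak aS Pa.
have [-> | a0] := eqVneq a 0.
  by rewrite proj_on_id ?supp0 ?sub0set //; apply: subspace0.
have /set0Pn [h ah] : supp a != set0 by rewrite supp_eq0.
rewrite in_supp in ah.
have [D [cD hD Da]] := circuit_in_supp Pa ah.
have [b _ [Pb bD]] := circuit_supp cD.
have ba : supp b \subset supp a by rewrite bD.
have bh : b 0 h != 0 by rewrite -in_supp bD.
have -> : proj_on T a = proj_on T (pivot a b h) + (a 0 h / b 0 h) *: proj_on T b.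
  by rewrite /pivot proj_onB subrK.
apply: subspaceD (IH _ _ _ (subspaceB _ Pa Pb)) (subspaceZ _ _).
- exact: leq_trans (card_supp_pivot bh ba ah) le_ak.
- exact: supp_lin aS (subset_trans ba aS).
have [DT0 | /set0Pn [x /setIP [xD xT]]] := eqVneq (D :&: T) set0.
  have -> : proj_on T b = 0 by apply/eqP; rewrite -supp_eq0 supp_proj_on bD DT0.
  exact: subspace0.
by rewrite proj_on_id // bD (closedT D x) // (subset_trans Da aS).
Qed.

Lemma comp_of_closed S e D x : e \in S -> circuit dep D -> D \subset S -> x \in D ->
  x \in comp_of dep S e -> D \subset comp_of dep S e.
Proof.
move=> eS cD DS xD /comp_ofP [_ xe]; apply/subsetP => g gD; apply/comp_ofP.
split; first exact: (subsetP DS).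
right; case: xe => [xe | [D' [cD' D'S eD' xD']]]; first by exists D; rewrite -xe.
have meet : D' :&: D != set0 by apply/set0Pn; exists x; rewrite inE xD' xD.
have [C [cC eC gC CU]] := circuit_link cD' cD eD' gD meet.
by exists C; split => //; apply: subset_trans CU _; rewrite subUset D'S DS.
Qed.

Lemma separator_comp_of S e : e \in S -> separator S (comp_of dep S e).
Proof.
move=> eS; apply: circuit_closed_separator; first exact: comp_of_sub.
by move=> D x cD DS xD; apply: comp_of_closed.
Qed.

Lemma comp_of_sub_separator S T e : separator S T -> e \in T -> comp_of dep S e \subset T.
Proof.
move=> sepT eT; apply/subsetP => f /comp_ofP [fS [-> // | [D [cD DS eD fD]]]].
exact: subsetP (separator_circuit sepT cD DS eD eT) f fD.
Qed.

Lemma connected_separatorP S : connected_on dep S <->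
  (forall T e, separator S T -> e \in T -> S \subset T).
Proof.
split=> [conn T e sepT eT | sepS e f eS fS ef].
  have eS := subsetP sepT.1 e eT.
  apply/subsetP => f fS; have [<- // | ef] := eqVneq e f.
  have [C [cC CS eC fC]] := conn e f eS fS ef.
  exact: subsetP (separator_circuit sepT cC CS eC eT) f fC.
have /subsetP/(_ f fS)/comp_ofP [_ [fe | //]] :=
  sepS _ e (separator_comp_of eS) (mem_comp_of _ eS).
by rewrite fe eqxx in ef.
Qed.

Lemma connected_comp_of S e : e \in S -> connected_on dep (comp_of dep S e).
Proof.
move=> eS f g /comp_ofP [fS fe] /comp_ofP [gS ge] fg.
suff [C [cC CS fC gC]] : linked dep S f g.
  by exists C; split => //; apply: comp_of_closed eS cC CS fC _; apply/comp_ofP.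
case: fe ge => [fe | [D1 [c1 D1S eD1 fD1]]] [ge | [D2 [c2 D2S eD2 gD2]]].
- by rewrite fe ge eqxx in fg.
- by exists D2; rewrite fe.
- by exists D1; rewrite ge.
have meet : D1 :&: D2 != set0 by apply/set0Pn; exists e; rewrite inE eD1.
have [C [cC fC gC CU]] := circuit_link c1 c2 fD1 gD2 meet.
by exists C; split => //; apply: subset_trans CU _; rewrite subUset D1S.
Qed.

Lemma component_comp_of S e : e \in S -> component dep S (comp_of dep S e).
Proof.
move=> eS; split; [exact: comp_of_sub | exact: connected_comp_of |].
move=> C' subC' C'S connC'; apply/eqP; rewrite eqEsubset subC' andbT.
apply/subsetP => f fC'; apply/comp_ofP; split; first exact: (subsetP C'S).
have [-> | ef] := eqVneq e f; [by left | right].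
have eC' := subsetP subC' e (mem_comp_of _ eS).
have [C [cC CC' eC fC]] := connC' e f eC' fC' ef.
by exists C; split => //; apply: subset_trans C'S.
Qed.

Lemma component_comp_ofE S C e : component dep S C -> e \in C -> C = comp_of dep S e.
Proof.
move=> [CS connC maxC] eC; have eS := subsetP CS e eC.
apply: esym; apply: maxC; [| exact: comp_of_sub | exact: connected_comp_of].
apply/subsetP => f fC; apply/comp_ofP; split; first exact: (subsetP CS).
have [-> | ef] := eqVneq e f; [by left | right].
have [D [cD DC eD fD]] := connC e f eC fC ef.
by exists D; split => //; apply: subset_trans CS.
Qed.

Lemma separator_component S C : component dep S C -> separator S C.
Proof.
move=> cC; have [-> | /set0Pn [e eC]] := eqVneq C set0.
  split=> [|a _ _]; first exact: sub0set.
  have -> : proj_on set0 a = 0 by apply/eqP; rewrite -supp_eq0 supp_proj_on setI0.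
  exact: subspace0.
have [CS _ _] := cC; rewrite (component_comp_ofE cC eC).
exact/separator_comp_of/(subsetP CS).
Qed.

Lemma lin_dep1 e : dep [set e] <-> P (unit_row e).
Proof.
split=> [/lin_depP [a a0 [ae Pa]] | Pe]; last first.
  by apply/lin_depP; exists (unit_row e); rewrite ?unit_row_neq0 ?supp_unit_row.
have ae0 : a 0 e != 0.
  have /set0Pn [i ai] : supp a != set0 by rewrite supp_eq0.
  by have /set1P <- := subsetP ae i ai; rewrite -in_supp.
have -> : unit_row e = (a 0 e)^-1 *: a; last exact: subspaceZ.
apply/rowP => i; rewrite !mxE; have [-> | ie] := eqVneq i e; first by rewrite mulVf.
by move/suppP: ae => /(_ i) ->; rewrite ?mulr0 // inE.
Qed.

Lemma rank0P S : rank_of dep S 0 <-> forall e, e \in S -> P (unit_row e).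
Proof.
split=> [[_ indep0] e eS | loops].
  apply/lin_dep1; apply: contrapT => indep_e.
  by have := indep0 [set e]; rewrite sub1set cards1 => /(_ eS indep_e).
split=> [|X XS indepX]; last first.
  rewrite leqn0 cards_eq0; apply/negPn/negP => /set0Pn [x xX]; apply: indepX.
  apply/lin_depP; exists (unit_row x); first exact: unit_row_neq0.
  by rewrite supp_unit_row sub1set xX; split => //; apply: loops (subsetP XS x xX).
exists set0; rewrite ?sub0set ?cards0 //; split => // /lin_depP [a a0 [a_sub _]].
by move: a_sub; rewrite subset0 supp_eq0 (negbTE a0).
Qed.

End LinearMatroid.

Section Duality.
Variables (F : fieldType) (n : nat).
Implicit Types (P Q : 'rV[F]_n -> Prop) (a b u : 'rV[F]_n) (S T C : {set 'I_n}).

Definition perp_on S P Q := forall a, supp a \subset S ->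
  (Q a <-> forall b, supp b \subset S -> P b -> dot b a = 0).

Definition dual_on S P Q := [/\ subspace P, subspace Q, perp_on S P Q & perp_on S Q P].

Lemma dual_onC S P Q : dual_on S P Q -> dual_on S Q P.
Proof. by case. Qed.

Lemma perp_on_separator S T P Q : perp_on S P Q -> separator P S T -> separator Q S T.
Proof.
move=> perpPQ [TS sepT]; split=> // a aS Qa.
apply/(perpPQ _ (supp_proj_onS T aS)) => b bS Pb; rewrite dotC dot_proj_on dotC.
exact: (perpPQ a aS).1 Qa _ (supp_proj_onS T bS) (sepT b bS Pb).
Qed.

Lemma perp_on_sub S C P Q : perp_on S P Q -> separator P S C -> perp_on C P Q.
Proof.
move=> perpPQ [CS sepC] a aC; have aS := subset_trans aC CS.
split=> [Qa b bC | orth_a]; first exact: (perpPQ a aS).1 Qa b (subset_trans bC CS).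
apply/(perpPQ a aS) => b bS Pb; rewrite -(proj_on_id aC) -dot_proj_on.
exact: orth_a (supp_proj_on_sub _ _) (sepC b bS Pb).
Qed.

Section DualPair.
Variables (S : {set 'I_n}) (P Q : 'rV[F]_n -> Prop).
Hypothesis dualPQ : dual_on S P Q.

Lemma dual_separator T : separator P S T <-> separator Q S T.
Proof. by have [_ _ ? ?] := dualPQ; split; apply: perp_on_separator. Qed.

Lemma dual_rank0 : rank_of (lin_dep P) S 0 <-> rank_of (lin_dep Q) S #|S|.
Proof.
have [subP subQ perpPQ perpQP] := dualPQ.
rewrite (rank0P subP) rank_fullP; split=> [loops /lin_depP [a a0 [aS Qa]] | indepS e eS].
  have /set0Pn [i ai] : supp a != set0 by rewrite supp_eq0.
  have iS := subsetP aS i ai.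
  have := (perpPQ a aS).1 Qa (unit_row i).
  rewrite supp_unit_row sub1set iS dot_unit_row => /(_ isT (loops i iS)) ai0.
  by rewrite in_supp ai0 eqxx in ai.
have ueS : supp (unit_row e : 'rV[F]_n) \subset S by rewrite supp_unit_row sub1set.
apply/(perpQP _ ueS) => b bS Qb; have [-> | b0] := eqVneq b 0; first by rewrite dotC dot0r.
by case: indepS; apply/lin_depP; exists b.
Qed.

Lemma dual_connected : connected_on (lin_dep P) S <-> connected_on (lin_dep Q) S.
Proof.
have [subP subQ _ _] := dualPQ.
rewrite (connected_separatorP subP) (connected_separatorP subQ).
by split=> conn T e /dual_separator; apply: conn.
Qed.

Lemma dual_comp_of e : e \in S -> comp_of (lin_dep P) S e = comp_of (lin_dep Q) S e.
Proof.
have [subP subQ _ _] := dualPQ.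
move=> eS; apply/eqP; rewrite eqEsubset; apply/andP; split.
  apply: comp_of_sub_separator (mem_comp_of _ eS).
  exact/dual_separator/(separator_comp_of subQ).
apply: comp_of_sub_separator (mem_comp_of _ eS).
exact/dual_separator/(separator_comp_of subP).
Qed.

Lemma dual_component C : component (lin_dep P) S C -> component (lin_dep Q) S C.
Proof.
have [subP subQ _ _] := dualPQ.
move=> compC; have [C0 | /set0Pn [e eC]] := eqVneq C set0.
  by move: compC; rewrite C0 !component_set0P.
have [CS _ _] := compC; have eS := subsetP CS e eC.
by rewrite (component_comp_ofE subP compC eC) dual_comp_of //; apply: component_comp_of.
Qed.

Lemma dual_on_component C : component (lin_dep P) S C -> dual_on C P Q.
Proof.
have [subP subQ perpPQ perpQP] := dualPQ.
move=> compC; have sepP := separator_component subP compC.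
split=> //; first exact: perp_on_sub sepP.
exact/(perp_on_sub perpQP)/dual_separator.
Qed.

Lemma dual_on_extend u P' Q' : supp u \subset S -> subspace P' -> subspace Q' ->
  (forall b, supp b \subset S -> P' b <-> exists c, P (b - c *: u)) ->
  (forall a, supp a \subset S -> Q' a <-> Q a /\ dot a u = 0) ->
  dual_on S P' Q'.
Proof.
have [subP subQ perpPQ perpQP] := dualPQ.
move=> uS subP' subQ' P'E Q'E; split=> // [a aS | b bS].
  rewrite Q'E //; split=> [[Qa au] b bS /(P'E b bS) [c Pbc] | orth_a].
    have := (perpPQ a aS).1 Qa _ (supp_lin c bS uS) Pbc.
    by rewrite dotBl (dotC u) au mulr0 subr0.
  split; last first.
    rewrite dotC; apply: (orth_a u uS); apply/P'E => //.
    by exists 1; rewrite scale1r subrr; apply: subspace0.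
  apply/(perpPQ a aS) => b bS Pb; apply: (orth_a b bS).
  by apply/P'E => //; exists 0; rewrite scale0r subr0.
rewrite P'E //; split=> [[c Pbc] a aS /(Q'E a aS) [Qa au] | orth_b].
  have := (perpQP _ (supp_lin c bS uS)).1 Pbc a aS Qa.
  by rewrite dotBr au mulr0 subr0.
have [[a0 [a0S Qa0 a0u]] | Q_perp_u] :=
  EM (exists a0, [/\ supp a0 \subset S, Q a0 & dot a0 u != 0]); last first.
  exists 0; rewrite scale0r subr0; apply/(perpQP b bS) => a aS Qa.
  apply: (orth_b a aS); apply/Q'E => //; split => //; apply: contrapT => au.
  by apply: Q_perp_u; exists a; split=> //; apply/eqP.
exists (dot a0 b / dot a0 u); apply/(perpQP _ (supp_lin _ bS uS)) => a aS Qa.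
have Q'a' : Q' (a - (dot a u / dot a0 u) *: a0).
  apply/Q'E; first exact: supp_lin.
  by split; [exact: (subspaceB subQ) | rewrite dotBl divfK ?subrr].
have := orth_b _ (supp_lin _ aS a0S) Q'a'.
rewrite dotBr dotBl => /eqP; rewrite subr_eq0 => /eqP ->.
by ring.
Qed.

End DualPair.

End Duality.

(* [mat_dep M K] unfolds to [lin_dep (col_rel M K)]. *)
Definition col_rel (F : fieldType) (k n : nat) (M : 'M[F]_(k, n)) (K : 'M[F]_k)
  (a : 'rV[F]_n) := (a *m M^T <= K)%MS.

Section ColumnMatroid.
Variables (F : fieldType) (n : nat).
Implicit Types (a b u : 'rV[F]_n).

Lemma subspace_col_rel k (M : 'M[F]_(k, n)) K : subspace (col_rel M K).
Proof.
split=> [|c a b]; first by rewrite /col_rel mul0mx sub0mx.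
by rewrite /col_rel mulmxDl -scalemxAl => aK bK; apply: addmx_sub (scalemx_sub _ aK) bK.
Qed.

Lemma col_rel0_perp k (M : 'M[F]_(k, n)) a :
  col_rel M 0 a <-> forall w, (w <= M)%MS -> dot a w = 0.
Proof.
rewrite /col_rel submx0; split=> [/eqP aM0 w /submxP [y ->] | orth].
  by rewrite -dot_mx trmx_mul mulmxA aM0 mul0mx mxE.
apply/eqP/rowP => j; rewrite [RHS]mxE -(orth _ (row_sub j M)) mxE.
by apply: eq_bigr => i _; rewrite !mxE.
Qed.

Lemma col_rel_col_mx p (B : 'M[F]_(p, n)) u a :
  col_rel (col_mx B u) 0 a <-> col_rel B 0 a /\ dot a u = 0.
Proof.
rewrite /col_rel tr_col_mx mul_mx_row !submx0 row_mx_eq0.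
split=> [/andP [-> /eqP au] | [-> au]]; first by rewrite -dot_mx au mxE.
by apply/eqP/rowP => i; rewrite (ord1 i) dot_mx au mxE.
Qed.

Lemma addsmx_row_exchange m (K : 'M[F]_m) (v w : 'rV[F]_m) :
  (w <= K + v)%MS -> ~~ (w <= K)%MS -> (K + v :=: K + w)%MS.
Proof.
move=> wKv wNK; have /sub_addsmxP [[x y] /= wE] := wKv.
have y0 : y 0 0 != 0.
  apply: contraNneq wNK => y00.
  by rewrite wE (mx11_scalar y) y00 mul_scalar_mx scale0r addr0 submxMl.
have vE : v = (y 0 0)^-1 *: (w - x *m K).
  rewrite wE addrAC subrr add0r [in y *m v](mx11_scalar y) mul_scalar_mx.
  by rewrite scalerA mulVf ?scale1r.
apply/eqmxP; rewrite !addsmx_sub !addsmxSl wKv /= andbT vE.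
apply/scalemx_sub/addmx_sub; first exact: addsmxSr.
by rewrite -mulNmx (submx_trans (submxMl _ _) (addsmxSl _ _)).
Qed.

Lemma col_rel_adds_row m (M : 'M[F]_(m, n)) (K : 'M[F]_m) u b :
  col_rel M (K + u *m M^T)%MS b <-> exists c, col_rel M K (b - c *: u).
Proof.
rewrite /col_rel; split=> [/sub_addsmxP [[x y] /= bE] | [c bcK]].
  exists (y 0 0); rewrite mulmxBl -scalemxAl bE [in y *m _](mx11_scalar y).
  by rewrite mul_scalar_mx addrK submxMl.
rewrite -(subrK (c *: u) b) mulmxDl -scalemxAl.
by apply: addmx_sub (submx_trans bcK (addsmxSl _ _)) (scalemx_sub _ (addsmxSr _ _)).
Qed.

Lemma dual_on_col_rel m p (A : 'M[F]_(m, n)) (B : 'M[F]_(p, n)) :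
  (forall x, (x <= B)%MS <-> forall w, (w <= A)%MS -> dot x w = 0) ->
  dual_on setT (col_rel A 0) (col_rel B 0).
Proof.
move=> rowsB.
have relA_B b : col_rel A 0 b <-> (b <= B)%MS.
  exact: iff_trans (col_rel0_perp A b) (iff_sym (rowsB b)).
split=> [||a _|b _]; try exact: subspace_col_rel.
  apply: iff_trans (col_rel0_perp B a) _.
  split=> [orth b _ /relA_B bB | orth w wB]; rewrite dotC; first exact: orth.
  by apply: orth (subsetT _) _; apply/relA_B.
apply: iff_trans (relA_B b) _; split=> [bB a _ /col_rel0_perp orth | orth].
  exact: orth.
(* Rows of A are orthogonal to B: biorthogonality without a dimension count. *)
apply/rowsB => w wA; rewrite dotC; apply: orth (subsetT _) _.
by apply/col_rel0_perp => x xB; rewrite dotC; apply: (rowsB x).1.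
Qed.

End ColumnMatroid.

Section DepthDuality.
Variables (F : fieldType) (m n : nat) (A : 'M[F]_(m, n)).

Lemma csd_le_dsd_le d K S : csd_le A d K S ->
  forall p (B : 'M[F]_(p, n)), dual_on S (col_rel A K) (col_rel B 0) -> dsd_le d B S.
Proof.
elim=> {d K S} [d K S rk0 | d K S rkN0 disc _ IH | d K S v rkN0 conn _ IH] p B dualS.
- exact/dsd_free/(dual_rank0 dualS).
- apply: dsd_disconnected => [/(dual_rank0 dualS) | /(dual_connected dualS) | C compC] //.
  have compAC := dual_component (dual_onC dualS) compC.
  exact: IH compAC _ _ (dual_on_component dualS compAC).
have rkB : ~ rank_of (mat_dep B 0) S #|S| by move/(dual_rank0 dualS).
have connB : connected_on (mat_dep B 0) S by apply/(dual_connected dualS).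
(* On S, contracting v adds at most one new column relation u; if there is none,
   the contraction is invisible on S and appending a zero row is its dual. *)
have [[u [uS uKv uK]] | noNew] :=
  EM (exists u, [/\ supp u \subset S, col_rel A (K + v)%MS u & ~~ col_rel A K u]).
  apply: (dsd_connected (v := u)) rkB connB _; apply: IH.
  apply: (dual_on_extend dualS uS (subspace_col_rel _ _) (subspace_col_rel _ _)) => [b _ | a _].
    apply: iff_trans (col_rel_adds_row _ _ _ _).
    by rewrite /col_rel (addsmx_row_exchange uKv uK).
  exact: col_rel_col_mx.
apply: (dsd_connected (v := 0)) rkB connB _; apply: IH.
have zS : supp (0 : 'rV[F]_n) \subset S by rewrite supp0 sub0set.
apply: (dual_on_extend dualS zS (subspace_col_rel _ _) (subspace_col_rel _ _)) => [b bS | a _].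
- rewrite /col_rel; split=> [bKv | [c]]; last first.
    by rewrite scaler0 subr0 => /submx_trans; apply; apply: addsmxSl.
  by exists 0; rewrite scaler0 subr0; apply/negPn/negP => bK; apply: noNew; exists b.
- exact: col_rel_col_mx.
Qed.

Lemma dsd_le_csd_le d p (B : 'M[F]_(p, n)) S : dsd_le d B S ->
  forall K, dual_on S (col_rel A K) (col_rel B 0) -> csd_le A d K S.
Proof.
elim=> {d p B S} [d p B S free | d p B S freeN disc _ IH | d p B S u freeN conn _ IH] K dualS.
- exact/csd_rank0/(dual_rank0 dualS).
- apply: csd_disconnected => [/(dual_rank0 dualS) | /(dual_connected dualS) | C compC] //.
  exact: IH C (dual_component dualS compC) K (dual_on_component dualS compC).
apply: (csd_connected (v := proj_on S u *m A^T)) => [/(dual_rank0 dualS) | | ] //.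
  by apply/(dual_connected dualS).
apply: IH; apply: (dual_on_extend dualS (supp_proj_on_sub S u) (subspace_col_rel _ _)
                                  (subspace_col_rel _ _)) => [b _ | a aS].
  exact: col_rel_adds_row.
by rewrite -dot_proj_on proj_on_id //; apply: col_rel_col_mx.
Qed.

Definition nonloops K (S : {set 'I_n}) := [set e in S | ~~ col_rel A K (unit_row e)].

Lemma csd_le_nonloops K S d : (#|nonloops K S| + #|S| <= d)%N -> csd_le A d K S.
Proof.
have [N] := ubnP (#|nonloops K S| + #|S|).
elim: N K S d => // N IH K S d /[!ltnS] leN led.
have [rk0 | rkN0] := EM (rank_of (mat_dep A K) S 0); first exact: csd_rank0.
have [conn | disc] := EM (connected_on (mat_dep A K) S); last first.
  apply: csd_disconnected => // C compC; have [CS connC _] := compC.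
  have ltC : (#|C| < #|S|)%N.
    rewrite proper_card // properEneq CS andbT.
    by apply/negP => /eqP CS'; apply: disc; rewrite -CS'.
  have leC : (#|nonloops K C| <= #|nonloops K S|)%N.
    by apply/subset_leq_card/subsetP => x; rewrite !inE => /andP [/(subsetP CS) -> ->].
  apply: IH; lia.
have [e eS eK] : exists2 e, e \in S & ~~ col_rel A K (unit_row e).
  apply: contrapT => noE; apply: rkN0; apply/(rank0P (subspace_col_rel A K)) => e eS.
  by apply/negPn/negP => eK; apply: noE; exists e.
set K' := (K + unit_row e *m A^T)%MS.
have ltK : (#|nonloops K' S| < #|nonloops K S|)%N.
  rewrite proper_card // properE; apply/andP; split.
    apply/subsetP => x; rewrite !inE => /andP [-> /=]; apply: contra => xK.
    exact: submx_trans xK (addsmxSl _ _).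
  by apply/subsetPn; exists e; rewrite !inE ?eS ?negbK //= /col_rel addsmxSr.
case: d led => [|d] led; first by exfalso; lia.
apply: (csd_connected (v := unit_row e *m A^T)) rkN0 conn (IH K' S d _ _); lia.
Qed.

End DepthDuality.

Theorem theorem2 (F : fieldType) (m n p : nat)
    (A : 'M[F]_(m, n)) (B : 'M[F]_(p, n))
    (hB : forall x : 'rV[F]_n,
        (x <= B)%MS <->
        (forall w : 'rV[F]_n, (w <= A)%MS -> \sum_(i < n) x 0 i * w 0 i = 0)) :
  exists d : nat, csd_is A d /\ dsd_is B d.
Proof.
have dualT := dual_on_col_rel hB.
have csd_fin : exists d, `[< csd_le A d 0 setT >].
  by exists (#|nonloops A 0 setT| + #|[set: 'I_n]|)%N; apply/asboolP/csd_le_nonloops.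
have [d /asboolP csd_d min_d] := ex_minnP csd_fin.
exists d; split.
  by split=> // d' csd_d'; apply/min_d/asboolP.
split=> [|d' /dsd_le_csd_le/(_ 0 dualT) csd_d']; first exact: csd_le_dsd_le csd_d _ _ dualT.
exact/min_d/asboolP.
Qed.
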